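(* Let $\sigma(u)=1/(1+e^{-u})$, $\sigma_\tau(u)=\sigma(u/\tau)$ for $\tau>0$, let $z$ be a standard logistic random variable, $\eta\in\mathbb{R}$, and $\mathcal L:[0,1]\to\mathbb{R}$ continuously differentiable. Let $\hat G_\tau=\frac{d}{d\eta}\mathcal L(\sigma_\tau(\eta-z))$ be the Gumbel-Softmax gradient estimator. Then $\mathrm{Var}_z(\hat G_\tau)=O(1/\tau)$ as $\tau\to0^+$. *)

From HB Require Import structures.
From mathcomp Require Import all_boot all_order all_algebra.
From mathcomp Require Import all_classical all_reals all_analysis.
Set Implicit Arguments. Unset Strict Implicit. Unset Printing Implicit Defensive.
Import Order.TTheory GRing.Theory Num.Theory.
Import numFieldNormedType.Exports.
Local Open Scope classical_set_scope.
Local Open Scope ring_scope.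

Definition sigmoid {R : realType} (u : R) : R := (1 + expR (- u))^-1.

Definition sigmoid_tau {R : realType} (tau u : R) : R := sigmoid (u / tau).

Definition logistic_pdf {R : realType} (x : R) : R :=
  expR (- x) / (1 + expR (- x)) ^+ 2.

Definition logistic_E {R : realType} (f : R -> R) : \bar R :=
  (\int[@lebesgue_measure R]_x (f x * logistic_pdf x)%:E)%E.

Definition logistic_Var {R : realType} (f : R -> R) : \bar R :=
  let m := fine (logistic_E f) in logistic_E (fun x => (f x - m) ^+ 2).

Definition GS_estimator {R : realType} (L : R -> R) (tau eta z : R) : R :=
  derive1 (fun e => L (sigmoid_tau tau (e - z))) eta.

(* With q(z) = p((z - eta)/tau), p the logistic density, the chain rule gives
   G_tau(z) = L'(sigma((eta - z)/tau)) q(z) / tau, hence |G_tau| <= M q / tau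
   where M bounds |L'| on [0, 1].  Since p, q <= 1/4 and the integral of q is
   tau, E|G_tau| <= M/4 and E[G_tau^2] <= (M / (4 tau)) E|G_tau|
   <= M^2/(16 tau), so Var G_tau <= 2 E[G_tau^2] + 2 (E G_tau)^2 = O(1/tau). *)

From HB Require Import structures.
From mathcomp Require Import all_boot all_order all_algebra.
From mathcomp Require Import all_classical all_reals all_analysis.
From mathcomp Require Import ring lra measurable_realfun.
Import Order.TTheory GRing.Theory Num.Theory.
Import numFieldNormedType.Exports.
Local Open Scope classical_set_scope.
Local Open Scope ring_scope.

Section sigmoid.
Context {R : realType}.
Implicit Types x : R.

Lemma sigmoid_gt0 x : 0 < sigmoid x.
Proof. by rewrite /sigmoid invr_gt0 addr_gt0 ?expR_gt0. Qed.

Lemma sigmoid_lt1 x : sigmoid x < 1.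
Proof. by rewrite /sigmoid invf_lt1 ?ltrDl ?expR_gt0 ?addr_gt0 ?expR_gt0. Qed.

Lemma sigmoidN x : sigmoid (- x) = 1 - sigmoid x.
Proof.
rewrite /sigmoid opprK expRN.
have e_neq0 : expR x != 0 by rewrite gt_eqF ?expR_gt0.
have e1_neq0 : 1 + expR x != 0 by rewrite gt_eqF // addr_gt0 ?expR_gt0.
by field; rewrite e_neq0 addrC e1_neq0.
Qed.

Lemma logistic_pdf_sigmoid x : logistic_pdf x = sigmoid x * (1 - sigmoid x).
Proof.
rewrite /logistic_pdf /sigmoid.
have e1_neq0 : 1 + expR (- x) != 0 by rewrite gt_eqF // addr_gt0 ?expR_gt0.
by field.
Qed.

Lemma is_derive_sigmoid x : is_derive x 1 (@sigmoid R) (logistic_pdf x).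
Proof.
have dE : is_derive x 1 (fun y => 1 + expR (- y)) (expR (- x) * -1).
  rewrite -[X in is_derive _ _ _ X]add0r.
  by apply: is_deriveD; exact: (@is_derive1_comp _ expR (-%R)).
have e1_neq0 : 1 + expR (- x) != 0 by rewrite gt_eqF // addr_gt0 ?expR_gt0.
suff -> : logistic_pdf x = - (1 + expR (- x)) ^- 2 *: (expR (- x) * -1).
  exact: is_deriveV.
by rewrite /logistic_pdf /GRing.scale /=; field.
Qed.

Lemma continuous_sigmoid : continuous (@sigmoid R).
Proof.
move=> x; apply/differentiable_continuous/derivable1_diffP.
by case: (is_derive_sigmoid x).
Qed.

Lemma sigmoid_cvgy : sigmoid x @[x --> +oo] --> (1 : R).
Proof.
rewrite -[X in _ --> X]invr1; apply: cvgV; first exact: oner_neq0.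
rewrite -[X in _ --> X]addr0.
by apply: cvgD; [exact: cvg_cst | exact: cvgr_expR].
Qed.

Lemma sigmoid_cvgNy : sigmoid x @[x --> -oo] --> (0 : R).
Proof.
apply/cvgNy_compNP.
have -> : sigmoid \o -%R = fun x : R => 1 - sigmoid x.
  by apply/funext => x /=; rewrite sigmoidN.
by have := cvgB (cvg_cst (1 : R)) sigmoid_cvgy; rewrite subrr; apply.
Qed.

Lemma logistic_pdf_ge0 x : 0 <= logistic_pdf x.
Proof.
rewrite logistic_pdf_sigmoid.
by rewrite mulr_ge0 ?subr_ge0 ?ltW ?sigmoid_gt0 ?sigmoid_lt1.
Qed.

Lemma logistic_pdf_le x : logistic_pdf x <= 4^-1.
Proof.
rewrite logistic_pdf_sigmoid.
have := sqr_ge0 (sigmoid x - 2^-1).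
have -> : (4 : R)^-1 = 2^-1 * 2^-1 by rewrite -invfM -natrM.
nra.
Qed.

Lemma logistic_pdfN x : logistic_pdf (- x) = logistic_pdf x.
Proof. by rewrite !logistic_pdf_sigmoid sigmoidN; ring. Qed.

Lemma continuous_logistic_pdf : continuous (@logistic_pdf R).
Proof.
have -> : @logistic_pdf R = fun x => sigmoid x * (1 - sigmoid x).
  by apply/funext => x; rewrite logistic_pdf_sigmoid.
move=> x; apply: continuousM; first exact: continuous_sigmoid.
by apply: continuousB; [exact: cvg_cst | exact: continuous_sigmoid].
Qed.

End sigmoid.

Section integral_real_line.
Context {R : realType}.
Local Notation mu := (@lebesgue_measure R).

Lemma ge0_continuous_FTC2Nyy (f F : R -> R) (a b : R) :
  (forall x, 0 <= f x) -> continuous f ->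
  (forall x : R, is_derive x (1 : R) F (f x)) ->
  F x @[x --> -oo] --> a -> F x @[x --> +oo] --> b ->
  (\int[mu]_x (f x)%:E = (b - a)%:E)%E.
Proof.
move=> f0 cf dF Fa Fb.
have cF : continuous F.
  move=> x; apply/differentiable_continuous/derivable1_diffP.
  by case: (dF x).
have mf : measurable_fun [set: R] f by exact: continuous_measurable_fun.
have mge0 : measurable [set x : R | 0 <= x] by rewrite -set_itvcy.
(* Split the line at 0 and reflect the negative half-line onto the positive. *)
rewrite -(setUv [set x : R | 0 <= x]) ge0_integral_setU//=; last 4 first.
- exact: measurableC.
- by apply/measurable_EFinP; rewrite setUv.
- by move=> x _; rewrite lee_fin.
- exact/disj_setPCl.
have -> : (\int[mu]_(x in [set x | (0 <= x)%R]) (f x)%:E = b%:E - (F 0)%:E)%E.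
  rewrite -set_itvcy; apply: ge0_continuous_FTC2y => //.
  - exact: continuous_subspaceT.
  - exact: cvg_at_right_filter (cF 0).
  - by move=> x _; rewrite derive1E; case: (dF x).
rewrite -set_itvcy setCitvr integral_itv_bndo_bndc; last first.
  exact/measurable_EFinP/measurable_funTS.
rewrite -[X in `]-oo, X]]oppr0 ge0_integration_by_substitutionNy//; last first.
  exact: continuous_subspaceT.
have dFN (x : R) : is_derive x (1 : R) (fun y => - F (- y)) (f (- x)).
  have dFopp : is_derive x 1 (F \o -%R) (f (- x) * -1).
    by apply: is_derive1_comp; exact: dF.
  by have := is_deriveN dFopp; rewrite mulrN1 opprK.
rewrite (@ge0_continuous_FTC2y _ (f \o -%R) (fun y => - F (- y)) 0 (- a)) //=.
- by rewrite oppr0 opprK -!EFinD; congr EFin; ring.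
- apply: continuous_subspaceT => x.
  by apply: continuous_comp; [exact: opp_continuous | exact: cf].
- exact: (cvgNy_compNP _ _).1 (cvgN Fa).
- apply: cvg_at_right_filter.
  by case: (dFN 0) => /derivable1_diffP /differentiable_continuous.
- by move=> x _; rewrite derive1E; case: (dFN x).
Qed.

Lemma is_derive_affine (c t x : R) : t != 0 ->
  is_derive x (1 : R) (fun y => (y - c) / t) t^-1.
Proof.
move=> t_neq0.
have dB : is_derive x 1 (fun y : R => y - c) 1.
  by rewrite -[X in is_derive _ _ _ X]subr0; apply: is_deriveB.
have := is_deriveM dB (is_derive_cst t^-1 x 1).
by rewrite /GRing.scale /= mulr0 add0r mulr1.
Qed.

Lemma continuous_affine (c t : R) : continuous (fun x => (x - c) / t).
Proof.
move=> x; apply: cvgM; last exact: cvg_cst.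
by apply: cvgB; [exact: cvg_id | exact: cvg_cst].
Qed.

Lemma continuous_logistic_pdf_affine (c t : R) :
  continuous (fun x => logistic_pdf ((x - c) / t)).
Proof.
move=> x; apply: (@continuous_comp _ _ _ (fun y => (y - c) / t) logistic_pdf).
  exact: continuous_affine.
exact: continuous_logistic_pdf.
Qed.

Lemma integral_logistic_pdf_affine (c t : R) : 0 < t ->
  (\int[mu]_x (logistic_pdf ((x - c) / t))%:E = t%:E)%E.
Proof.
move=> t_gt0; have t_neq0 : t != 0 by rewrite gt_eqF.
have affine_cvgy : (fun y => (y - c) / t) x @[x --> +oo] --> +oo.
  apply/cvgryPge => A; near=> x.
  rewrite ler_pdivlMr // lerBrDr; near: x.
  by apply: nbhs_pinfty_ge; exact: num_real.
have affine_cvgNy : (fun y => (y - c) / t) x @[x --> -oo] --> -oo.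
  apply/cvgrNyPle => A; near=> x.
  rewrite ler_pdivrMr // lerBlDr; near: x.
  by apply: nbhs_ninfty_le; exact: num_real.
rewrite (_ : t%:E = (t * 1 - t * 0)%:E); last by rewrite mulr1 mulr0 subr0.
apply: (@ge0_continuous_FTC2Nyy _ (fun x => t * sigmoid ((x - c) / t))).
- by move=> x; exact: logistic_pdf_ge0.
- exact: continuous_logistic_pdf_affine.
- move=> x; have := is_deriveM (is_derive_cst t x 1)
    (is_derive1_comp (is_derive_sigmoid _) (is_derive_affine c t x t_neq0)).
  by rewrite /GRing.scale /= mulr0 addr0 mulrCA mulfV // mulr1.
- apply: cvgM; first exact: cvg_cst.
  exact: cvg_comp affine_cvgNy (@sigmoid_cvgNy R).
- apply: cvgM; first exact: cvg_cst.
  exact: cvg_comp affine_cvgy (@sigmoid_cvgy R).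
Unshelve. all: by end_near.
Qed.

Lemma integral_logistic_pdf : (\int[mu]_x (logistic_pdf x)%:E = 1%:E)%E.
Proof.
rewrite -(integral_logistic_pdf_affine 0 1 ltr01).
by apply: eq_integral => x _; rewrite subr0 divr1.
Qed.

End integral_real_line.

Section logistic_expectation.
Context {R : realType}.
Local Notation mu := (@lebesgue_measure R).
Implicit Types f g : R -> R.

Let measurable_pdfM f : measurable_fun [set: R] f ->
  measurable_fun [set: R] (fun x => (f x * logistic_pdf x)%:E).
Proof.
move=> mf; apply/measurable_EFinP; apply: measurable_funM => //.
exact: continuous_measurable_fun (@continuous_logistic_pdf R).
Qed.

Lemma logistic_E_ge0 f : (forall x, 0 <= f x) -> (0 <= logistic_E f)%E.
Proof.
move=> f0; apply: integral_ge0 => x _.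
by rewrite lee_fin mulr_ge0 ?logistic_pdf_ge0.
Qed.

Lemma le_logistic_E f g :
  measurable_fun [set: R] f -> measurable_fun [set: R] g ->
  (forall x, 0 <= f x <= g x) -> (logistic_E f <= logistic_E g)%E.
Proof.
move=> mf mg fg; apply: ge0_le_integral => //.
- move=> x _; have /andP[f0 _] := fg x.
  by rewrite lee_fin mulr_ge0 ?logistic_pdf_ge0.
- exact: measurable_pdfM.
- exact: measurable_pdfM.
- move=> x _; have /andP[_ fgx] := fg x.
  by rewrite lee_fin ler_wpM2r ?logistic_pdf_ge0.
Qed.

Lemma logistic_E_affine f (a b : R) : measurable_fun [set: R] f ->
  (forall x, 0 <= f x) -> 0 <= a -> 0 <= b ->
  logistic_E (fun x => a * f x + b) = (a%:E * logistic_E f + b%:E)%E.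
Proof.
move=> mf f0 a0 b0; rewrite /logistic_E.
under eq_integral do rewrite mulrDl -mulrA EFinD EFinM [X in (_ + X)%E]EFinM.
have fp0 x : (0 <= (f x * logistic_pdf x)%:E)%E.
  by rewrite lee_fin mulr_ge0 ?logistic_pdf_ge0.
have p0 x : (0 <= (logistic_pdf x)%:E)%E by rewrite lee_fin logistic_pdf_ge0.
have mp : measurable_fun [set: R] (fun x => (logistic_pdf x)%:E).
  apply/measurable_EFinP.
  exact: continuous_measurable_fun (@continuous_logistic_pdf R).
rewrite ge0_integralD //; last 4 first.
- by move=> x _; rewrite mule_ge0 ?fp0 ?lee_fin.
- by apply: measurable_funeM; exact: measurable_pdfM.
- by move=> x _; rewrite mule_ge0 ?p0 ?lee_fin.
- exact: measurable_funeM.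
rewrite !ge0_integralZl_EFin //; last exact: measurable_pdfM.
by rewrite integral_logistic_pdf mule1.
Qed.

Lemma abs_fine_logistic_E_le f g (c : R) :
  measurable_fun [set: R] f -> measurable_fun [set: R] g ->
  (forall x, `|f x| <= g x) -> (logistic_E g <= c%:E)%E ->
  `|fine (logistic_E f)| <= c.
Proof.
move=> mf mg fg Egc.
have c0 : 0 <= c.
  rewrite -lee_fin; apply: le_trans Egc; apply: logistic_E_ge0 => x.
  exact: le_trans (fg x).
suff : (`|logistic_E f| <= c%:E)%E.
  by case: (logistic_E f) => [r | |] //=; rewrite ?lee_fin ?normr0.
rewrite {1}/logistic_E.
apply: le_trans (le_abse_integral mu measurableT (measurable_pdfM _ mf)) _.
have Eabs : (\int[mu]_x `|(f x * logistic_pdf x)%R%:E|)%E =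
    logistic_E (fun x => `|f x|).
  apply: eq_integral => x _.
  by rewrite /= normrM (ger0_norm (logistic_pdf_ge0 x)).
rewrite Eabs; apply: le_trans Egc; apply: le_logistic_E => //.
- exact: measurableT_comp.
- by move=> x; rewrite normr_ge0 fg.
Qed.

Lemma logistic_Var_le f g (B c : R) :
  measurable_fun [set: R] f -> measurable_fun [set: R] g ->
  (forall x, `|f x| <= g x) -> (forall x, g x <= B) ->
  (logistic_E g <= c%:E)%E ->
  (logistic_Var f <= (2 * B * c + 2 * c ^+ 2)%:E)%E.
Proof.
move=> mf mg fg gB Egc.
have g0 x : 0 <= g x := le_trans (normr_ge0 _) (fg x).
have B0 : 0 <= B := le_trans (g0 0) (gB 0).
have c0 : 0 <= c by rewrite -lee_fin; exact: le_trans (logistic_E_ge0 _ g0) Egc.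
have m_le := abs_fine_logistic_E_le _ _ _ mf mg fg Egc.
rewrite /logistic_Var; set m := fine _.
have dev_le x : 0 <= (f x - m) ^+ 2 <= 2 * B * g x + 2 * c ^+ 2.
  rewrite sqr_ge0 /=.
  have f2 : f x ^+ 2 <= B * g x.
    rewrite -real_normK ?num_real // expr2.
    have fB : `|f x| <= B := le_trans (fg x) (gB x).
    by apply: ler_pM; rewrite ?normr_ge0 ?fB ?fg.
  have m2 : m ^+ 2 <= c ^+ 2.
    by rewrite -real_normK ?num_real //; apply: lerXn2r; rewrite ?nnegrE.
  (* (f - m)^2 + (f + m)^2 = 2 f^2 + 2 m^2 *)
  have := sqr_ge0 (f x + m); nra.
apply: le_trans (le_logistic_E _ _ _ _ dev_le) _.
- exact/measurable_funX/measurable_funB.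
- exact/measurable_funD/measurable_cst/measurable_funM.
rewrite logistic_E_affine ?mulr_ge0 ?sqr_ge0 // EFinD leeD2r //.
rewrite [(2 * B * c)%:E]EFinM.
by apply: lee_wpmul2l; rewrite ?lee_fin ?mulr_ge0.
Qed.

Lemma logistic_E_logistic_pdf_affine_le (k c t : R) : 0 <= k -> 0 < t ->
  (logistic_E (fun z => (k * logistic_pdf ((z - c) / t))%R)
    <= (k * t / 4)%:E)%E.
Proof.
move=> k0 t_gt0; have t_neq0 : t != 0 by rewrite gt_eqF.
set q := fun z => logistic_pdf ((z - c) / t).
have q0 z : 0 <= q z by exact: logistic_pdf_ge0.
have mq : measurable_fun [set: R] q.
  exact: continuous_measurable_fun (continuous_logistic_pdf_affine c t).
rewrite /logistic_E.
apply: (@le_trans _ _ (\int[mu]_z ((k / 4)%:E * (q z)%:E))%E).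
  apply: ge0_le_integral => //.
  - by move=> z _; rewrite lee_fin !mulr_ge0 ?logistic_pdf_ge0.
  - by apply: measurable_pdfM; apply: measurable_funM.
  - by apply: measurable_funeM; apply/measurable_EFinP.
  - move=> z _; rewrite -EFinM lee_fin -/(q z).
    have := logistic_pdf_le z; have := mulr_ge0 k0 (q0 z); nra.
rewrite ge0_integralZl_EFin ?divr_ge0 //; last 2 first.
- by move=> z _; rewrite lee_fin.
- exact/measurable_EFinP.
by rewrite integral_logistic_pdf_affine // -EFinM mulrAC.
Qed.

End logistic_expectation.

Lemma continuous_itvcc_bounded {R : realType} {f : R -> R} {a b : R} :
  {within `[a, b], continuous f} ->
  exists2 M, 0 < M & forall x, x \in `[a, b] -> `|f x| <= M.
Proof.
move=> cf.
have /compact_bounded[N [_ N_bound]] :=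
  continuous_compact cf (@segment_compact _ a b).
exists (`|N| + 1); first by rewrite ltr_pwDr.
by move=> x xab; apply: N_bound; [rewrite ltr_pwDr ?ler_norm | exists x].
Qed.

Section gumbel_softmax.
Context {R : realType} {L dL : R -> R}.
Hypothesis dL_deriv : forall x : R, 0 < x < 1 -> is_derive x 1 L (dL x).

Lemma GS_estimatorE (t eta z : R) : t != 0 ->
  GS_estimator L t eta z =
    dL (sigmoid ((eta - z) / t)) * (logistic_pdf ((z - eta) / t) / t).
Proof.
move=> t_neq0.
have dS := @is_derive1_comp _ sigmoid (fun y => (y - z) / t) eta _ _
  (is_derive_sigmoid _) (is_derive_affine z t eta t_neq0).
have S01 : 0 < sigmoid ((eta - z) / t) < 1 by rewrite sigmoid_gt0 sigmoid_lt1.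
have [_ dLS] := @is_derive1_comp _ L _ eta _ _ (dL_deriv _ S01) dS.
have -> : (z - eta) / t = - ((eta - z) / t) by rewrite -mulNr opprB.
by rewrite logistic_pdfN -dLS /GS_estimator derive1E.
Qed.

Lemma GS_estimator_le (M t eta z : R) :
  (forall y, 0 < y < 1 -> `|dL y| <= M) -> 0 < t ->
  `|GS_estimator L t eta z| <= M / t * logistic_pdf ((z - eta) / t).
Proof.
move=> dL_le t_gt0; rewrite GS_estimatorE ?gt_eqF //.
set p := logistic_pdf _.
have p_div0 : 0 <= p / t by rewrite divr_ge0 ?logistic_pdf_ge0 ?ltW.
have -> : M / t * p = M * (p / t) by rewrite mulrAC mulrA.
rewrite normrM (ger0_norm p_div0) ler_wpM2r //.
by rewrite dL_le // sigmoid_gt0 sigmoid_lt1.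
Qed.

Lemma continuous_GS_estimator (t eta : R) : t != 0 ->
  {in `]0, 1[, continuous dL} -> continuous (GS_estimator L t eta).
Proof.
move=> t_neq0 dL_cont.
have -> : GS_estimator L t eta = fun z =>
    dL (sigmoid ((z - eta) / - t)) * (logistic_pdf ((z - eta) / t) / t).
  by apply/funext => z; rewrite GS_estimatorE // invrN mulrN -mulNr opprB.
move=> z; apply: cvgM; last first.
  by apply: cvgM; [exact: continuous_logistic_pdf_affine | exact: cvg_cst].
apply: (@continuous_comp _ _ _ (fun z => sigmoid ((z - eta) / - t)) dL).
  apply: (@continuous_comp _ _ _ (fun z => (z - eta) / - t) sigmoid).
    exact: continuous_affine.
  exact: continuous_sigmoid.
by apply: dL_cont; rewrite in_itv /= sigmoid_gt0 sigmoid_lt1.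
Qed.

End gumbel_softmax.

Theorem propositionE4 (R : realType) (L dL : R -> R) (eta : R)
  (hdL : forall x : R, 0 < x < 1 -> is_derive x 1 L (dL x))
  (hcont : {within `[0, 1], continuous dL}) :
  exists C : R, exists delta : R, 0 < delta /\
    forall tau : R, 0 < tau -> tau < delta ->
      (logistic_Var (GS_estimator L tau eta) <= (C / tau)%:E)%E.
Proof.
have [M M_gt0 dL_le] := continuous_itvcc_bounded hcont.
have [dL_cont _ _] := (continuous_within_itvP _ ltr01).1 hcont.
exists (M ^+ 2 / 4), 1; split => // t t_gt0 t_lt1.
have t_neq0 : t != 0 by rewrite gt_eqF.
have Mt_ge0 : 0 <= M / t by rewrite divr_ge0 ?ltW.
set g := fun z => M / t * logistic_pdf ((z - eta) / t).
apply: le_trans (@logistic_Var_le _ _ g (M / t / 4) (M / 4) _ _ _ _ _) _.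
- apply: continuous_measurable_fun.
  exact: continuous_GS_estimator hdL t eta t_neq0 dL_cont.
- apply: continuous_measurable_fun => z.
  by apply: cvgM; [exact: cvg_cst | exact: continuous_logistic_pdf_affine].
- move=> z; apply: GS_estimator_le => // y /andP[y_gt0 y_lt1].
  by apply: dL_le; rewrite in_itv /= !ltW.
- by move=> z; rewrite ler_wpM2l ?logistic_pdf_le.
- have := logistic_E_logistic_pdf_affine_le (M / t) eta t Mt_ge0 t_gt0.
  by rewrite mulfVK.
rewrite lee_fin.
have -> : 2 * (M / t / 4) * (M / 4) + 2 * (M / 4) ^+ 2 =
    M ^+ 2 / 8 / t + M ^+ 2 / 8 by field.
have -> : M ^+ 2 / 4 / t = M ^+ 2 / 8 / t + M ^+ 2 / 8 / t by field.
by rewrite lerD2l ler_pdivlMr // ler_piMr ?ltW // divr_gt0 ?exprn_gt0.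
Qed.
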